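(* Let $f$ be a $2\pi$-periodic continuous function with modulus of continuity $\omega(\delta)=\omega(\delta,f)$. Suppose there is a function $H(u)\ge 0$ such that \[ \int_u^{\pi} t^{-2}\omega(t)\,dt=\mathcal{O}\big(H(u)\big)\quad (u\to+0) \qquad\text{and}\qquad \int_0^{t}H(u)\,du=\mathcal{O}\big(tH(t)\big)\quad (t\to+0). \] Then, for positive integers $m$, \[ \int_0^{\pi/m}\omega(t)\,dt=\mathcal{O}\big(m^{-2}H(\pi/m)\big). \]
   Context: $\omega(\delta,f)=\sup_{|h|\le\delta}\sup_x|f(x+h)-f(x)|$ is the modulus of continuity of $f$. The notation $u=\mathcal{O}(v)$ means $u\le Cv$ for some positive constant $C$. *)

From Stdlib Require Import Reals.
From Coquelicot Require Import Coquelicot.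
Open Scope R_scope.

(* Modulus of continuity:
   omega f d = sup_{|h| <= d} sup_x |f(x+h) - f(x)|
   (the supremum, as an element of Rbar, projected to R; for continuous
    2pi-periodic f it is finite). *)
Definition modcont (f : R -> R) (d : R) : R :=
  real (Lub_Rbar (fun r => exists x h, Rabs h <= d /\ r = Rabs (f (x + h) - f x))).

From Stdlib Require Import Reals Lra Lia ZArith.
From Coquelicot Require Import Coquelicot.
Open Scope R_scope.

(* Since [omega] is nondecreasing, [int_0^a omega <= a omega(a)] while
   [int_a^(2a) t^-2 omega(t) dt >= omega(a) / (4a)]; the first hypothesis
   at [u = a = pi/m] therefore gives [int_0^(pi/m) omega <= 4 (pi/m)^2 C H(pi/m)]. *)

Section Periodic.

Variables (f : R -> R) (T : R).
Hypothesis T_gt0 : 0 < T.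
Hypothesis f_periodic : forall x, f (x + T) = f x.

Lemma periodic_nat n x : f (x + INR n * T) = f x.
Proof.
  induction n as [|n IH].
  - now rewrite Rmult_0_l, Rplus_0_r.
  - rewrite S_INR.
    replace (x + (INR n + 1) * T) with ((x + INR n * T) + T) by ring.
    now rewrite f_periodic.
Qed.

Lemma periodic_Z n x : f (x + IZR n * T) = f x.
Proof.
  destruct (Z_le_gt_dec 0 n) as [Hn | Hn].
  - rewrite <- (Z2Nat.id n Hn), <- INR_IZR_INZ. apply periodic_nat.
  - replace n with (- Z.of_nat (Z.to_nat (- n)))%Z by lia.
    rewrite opp_IZR, <- INR_IZR_INZ.
    rewrite <- (periodic_nat (Z.to_nat (- n)) (x + - INR (Z.to_nat (- n)) * T)).
    f_equal. ring.
Qed.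

Lemma periodic_shift_into_period x :
  exists c, 0 <= x + c <= T /\ forall z, f (z + c) = f z.
Proof.
  set (k := (up (x / T) - 1)%Z).
  destruct (archimed (x / T)) as [up_gt up_le].
  exists (IZR (- k) * T). split.
  - replace (x + IZR (- k) * T) with ((x / T - IZR k) * T)
      by (rewrite opp_IZR; field; lra).
    unfold k. rewrite minus_IZR. simpl.
    split; [apply Rmult_le_pos; lra|].
    apply Rle_trans with (1 * T); [apply Rmult_le_compat_r | rewrite Rmult_1_l]; lra.
  - intro z. apply periodic_Z.
Qed.

Hypothesis f_cont : forall x, continuous f x.

Lemma periodic_bounded : exists B, forall x, Rabs (f x) <= B.
Proof.
  destruct (continuity_ab_maj (fun x => Rabs (f x)) 0 T) as [xmax [Hmax _]].
  - lra.
  - intros x _. apply (continuity_pt_comp f Rabs).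
    + apply continuity_pt_filterlim, f_cont.
    + apply Rcontinuity_abs.
  - exists (Rabs (f xmax)). intro x.
    destruct (periodic_shift_into_period x) as [c [Hc Hfc]].
    rewrite <- (Hfc x). now apply Hmax.
Qed.

Lemma periodic_uniformly_continuous eps : 0 < eps ->
  exists d, 0 < d /\ forall x y, Rabs (x - y) < d -> Rabs (f x - f y) < eps.
Proof.
  intro Heps.
  destruct (Heine f (fun c => - T <= c <= 2 * T) (compact_P3 _ _)
              (fun x _ => proj2 (continuity_pt_filterlim f x) (f_cont x))
              (mkposreal eps Heps)) as [[d Hd] Hunif].
  exists (Rmin d T). split; [now apply Rmin_glb_lt|].
  intros x y Hxy.
  pose proof (Rlt_le_trans _ _ _ Hxy (Rmin_l d T)) as Hxy_d.
  pose proof (Rabs_def2 _ _ (Rlt_le_trans _ _ _ Hxy (Rmin_r d T))) as Hxy_T.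
  destruct (periodic_shift_into_period x) as [c [Hc Hfc]].
  rewrite <- (Hfc x), <- (Hfc y). apply Hunif; simpl; [lra | lra |].
  now replace (x + c - (y + c)) with (x - y) by ring.
Qed.

End Periodic.

Section ModulusOfContinuity.

Variables (f : R -> R) (B : R).
Hypothesis f_bounded : forall x, Rabs (f x) <= B.

Let increments d r := exists x h, Rabs h <= d /\ r = Rabs (f (x + h) - f x).

Lemma modcont_is_lub d : 0 <= d -> is_lub_Rbar (increments d) (modcont f d).
Proof.
  intro Hd. unfold modcont. fold (increments d).
  destruct (Lub_Rbar_correct (increments d)) as [Hub Hleast].
  assert (lub_ge0 : Rbar_le 0 (Lub_Rbar (increments d))).
  { apply Hub. exists 0, 0. rewrite Rabs_R0, Rplus_0_r, Rminus_diag, Rabs_R0. now split. }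
  assert (lub_le : Rbar_le (Lub_Rbar (increments d)) (2 * B)).
  { apply Hleast. intros r [x [h [_ ->]]]. simpl.
    eapply Rle_trans; [apply Rabs_triang|]. rewrite Rabs_Ropp.
    pose proof (f_bounded (x + h)). pose proof (f_bounded x). lra. }
  destruct (Lub_Rbar (increments d)); simpl in *; try contradiction.
  now split.
Qed.

Lemma Rabs_increment_le_modcont d x h :
  0 <= d -> Rabs h <= d -> Rabs (f (x + h) - f x) <= modcont f d.
Proof.
  intros Hd Hh. apply (proj1 (modcont_is_lub d Hd)). now exists x, h.
Qed.

Lemma modcont_le d K : 0 <= d ->
  (forall x h, Rabs h <= d -> Rabs (f (x + h) - f x) <= K) -> modcont f d <= K.
Proof.
  intros Hd HK. apply (proj2 (modcont_is_lub d Hd) (Finite K)).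
  intros r [x [h [Hh ->]]]. now apply HK.
Qed.

Lemma modcont_ge0 d : 0 <= d -> 0 <= modcont f d.
Proof.
  intro Hd. eapply Rle_trans; [apply Rabs_pos|].
  apply (Rabs_increment_le_modcont d 0 0 Hd). now rewrite Rabs_R0.
Qed.

Lemma modcont_le_modcont d e : 0 <= d <= e -> modcont f d <= modcont f e.
Proof.
  intro Hde. apply modcont_le; [lra|].
  intros x h Hh. apply Rabs_increment_le_modcont; lra.
Qed.

Lemma modcont_add d e : 0 <= d -> 0 <= e ->
  modcont f (d + e) <= modcont f d + modcont f e.
Proof.
  intros Hd He. apply modcont_le; [lra|]. intros x h Hh.
  set (h1 := Rmax (- d) (Rmin d h)).
  assert (Hh1 : Rabs h1 <= d).
  { apply Rabs_le. unfold h1. split; [apply Rmax_l|].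
    apply Rmax_lub; [lra | apply Rmin_l]. }
  assert (Hh2 : Rabs (h - h1) <= e).
  { apply Rabs_le_between in Hh. apply Rabs_le. unfold h1.
    destruct (Rle_dec h d); destruct (Rle_dec (- d) h);
      rewrite ?Rmin_right, ?Rmin_left, ?Rmax_left, ?Rmax_right by lra; lra. }
  replace (f (x + h) - f x)
    with ((f (x + h1 + (h - h1)) - f (x + h1)) + (f (x + h1) - f x))
    by (replace (x + h1 + (h - h1)) with (x + h) by ring; ring).
  eapply Rle_trans; [apply Rabs_triang|].
  rewrite (Rplus_comm (modcont f d)).
  apply Rplus_le_compat; apply Rabs_increment_le_modcont; assumption.
Qed.

Lemma Rabs_modcont_sub_le d e : 0 <= d -> 0 <= e ->
  Rabs (modcont f d - modcont f e) <= modcont f (Rabs (d - e)).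
Proof.
  assert (ordered : forall s t, 0 <= s <= t ->
            Rabs (modcont f s - modcont f t) <= modcont f (Rabs (s - t))).
  { intros s t Hst.
    pose proof (modcont_add s (t - s) ltac:(lra) ltac:(lra)) as Hsub.
    replace (s + (t - s)) with t in Hsub by ring.
    pose proof (modcont_le_modcont s t Hst).
    rewrite Rabs_minus_sym, (Rabs_minus_sym s), !Rabs_right by lra. lra. }
  intros Hd He. destruct (Rle_dec d e); [apply ordered; lra|].
  rewrite Rabs_minus_sym, (Rabs_minus_sym d). apply ordered; lra.
Qed.

Hypothesis f_unif_cont : forall eps, 0 < eps ->
  exists d, 0 < d /\ forall x y, Rabs (x - y) < d -> Rabs (f x - f y) < eps.

Lemma continuous_modcont_Rabs x : continuous (fun t => modcont f (Rabs t)) x.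
Proof.
  apply continuity_pt_filterlim. intros eps Heps.
  destruct (f_unif_cont (eps / 2) ltac:(lra)) as [d [Hd Hunif]].
  exists d. split; [exact Hd|]. intros y [_ Hyx]. simpl in *. unfold R_dist in *.
  eapply Rle_lt_trans; [apply Rabs_modcont_sub_le; apply Rabs_pos|].
  apply Rle_lt_trans with (eps / 2); [|lra].
  apply modcont_le; [apply Rabs_pos|]. intros z h Hh. left. apply Hunif.
  replace (z + h - z) with h by ring.
  eapply Rle_lt_trans; [exact Hh|].
  eapply Rle_lt_trans; [apply Rabs_triang_inv2 | exact Hyx].
Qed.

Lemma ex_RInt_modcont a b : 0 <= a <= b -> ex_RInt (modcont f) a b.
Proof.
  intro Hab. apply (ex_RInt_ext (fun t => modcont f (Rabs t))).
  - intros x Hx. rewrite Rmin_left, Rmax_right in Hx by lra.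
    now rewrite Rabs_right by lra.
  - apply (@ex_RInt_continuous R_CompleteNormedModule).
    intros x _. apply continuous_modcont_Rabs.
Qed.

Lemma ex_RInt_inv_sq_modcont a b : 0 < a <= b ->
  ex_RInt (fun t => / t ^ 2 * modcont f t) a b.
Proof.
  intro Hab. apply (ex_RInt_ext (fun t => / t ^ 2 * modcont f (Rabs t))).
  - intros x Hx. rewrite Rmin_left, Rmax_right in Hx by lra.
    now rewrite Rabs_right by lra.
  - apply (@ex_RInt_continuous R_CompleteNormedModule).
    intros x Hx. rewrite Rmin_left, Rmax_right in Hx by lra.
    apply (continuous_mult (fun t => / t ^ 2)); [|apply continuous_modcont_Rabs].
    apply (@ex_derive_continuous R_AbsRing R_NormedModule).
    apply ex_derive_inv; [auto_derive; auto | apply pow_nonzero; lra].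
Qed.

End ModulusOfContinuity.

Section NondecreasingIntegrand.

Variable w : R -> R.
Hypothesis w_ge0 : forall t, 0 <= t -> 0 <= w t.
Hypothesis w_nondecr : forall s t, 0 <= s <= t -> w s <= w t.

Lemma RInt_le_length_mul_end a : 0 <= a -> ex_RInt w 0 a -> RInt w 0 a <= a * w a.
Proof.
  intros Ha Hint.
  eapply Rle_trans.
  - apply (RInt_le _ (fun _ => w a)); [exact Ha | exact Hint | apply ex_RInt_const |].
    intros x Hx. apply w_nondecr. lra.
  - rewrite RInt_const. unfold scal; simpl. unfold mult; simpl. lra.
Qed.

Lemma end_le_RInt_inv_sq a b : 0 < a -> 2 * a <= b ->
  ex_RInt (fun t => / t ^ 2 * w t) a b ->
  w a <= 4 * a * RInt (fun t => / t ^ 2 * w t) a b.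
Proof.
  intros Ha Hb Hint.
  set (g := fun t => / t ^ 2 * w t).
  assert (Hint1 : ex_RInt g a (2 * a)) by (apply (@ex_RInt_Chasles_1 R_CompleteNormedModule g a (2 * a) b); [lra | exact Hint]).
  assert (Hint2 : ex_RInt g (2 * a) b) by (apply (@ex_RInt_Chasles_2 R_CompleteNormedModule g a); [lra | exact Hint]).
  assert (tail_ge0 : 0 <= RInt g (2 * a) b).
  { apply RInt_ge_0; [lra | exact Hint2 |]. intros x Hx.
    apply Rmult_le_pos; [apply Rlt_le, Rinv_0_lt_compat, pow_lt; lra | apply w_ge0; lra]. }
  assert (head_ge : RInt (fun _ => / (4 * a ^ 2) * w a) a (2 * a) <= RInt g a (2 * a)).
  { apply RInt_le; [lra | apply ex_RInt_const | exact Hint1 |].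
    intros x Hx. apply Rmult_le_compat.
    - apply Rlt_le, Rinv_0_lt_compat. nra.
    - apply w_ge0. lra.
    - apply Rinv_le_contravar; [apply pow_lt; lra | nra].
    - apply w_nondecr. lra. }
  assert (head_const : RInt (fun _ => / (4 * a ^ 2) * w a) a (2 * a) = w a / (4 * a)).
  { rewrite RInt_const. unfold scal; simpl. unfold mult; simpl. field. lra. }
  pose proof (RInt_Chasles g a (2 * a) b Hint1 Hint2) as Hsplit.
  change (plus (RInt g a (2 * a)) (RInt g (2 * a) b))
    with (RInt g a (2 * a) + RInt g (2 * a) b) in Hsplit.
  fold g. rewrite <- Hsplit.
  replace (w a) with (4 * a * (w a / (4 * a))) at 1 by (field; lra).
  rewrite <- head_const. apply Rmult_le_compat_l; lra.
Qed.

Lemma RInt_le_four_sq_mul_RInt_inv_sq a b : 0 < a -> 2 * a <= b ->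
  ex_RInt w 0 a -> ex_RInt (fun t => / t ^ 2 * w t) a b ->
  RInt w 0 a <= 4 * a ^ 2 * RInt (fun t => / t ^ 2 * w t) a b.
Proof.
  intros Ha Hb Hw Hg.
  eapply Rle_trans; [apply RInt_le_length_mul_end; [lra | exact Hw]|].
  pose proof (end_le_RInt_inv_sq a b Ha Hb Hg).
  replace (4 * a ^ 2 * RInt (fun t => / t ^ 2 * w t) a b)
    with (a * (4 * a * RInt (fun t => / t ^ 2 * w t) a b)) by ring.
  apply Rmult_le_compat_l; lra.
Qed.

End NondecreasingIntegrand.

Lemma eventually_PI_div_INR_small u0 : 0 < u0 ->
  exists M : nat, forall m : nat, (M <= m)%nat -> 0 < PI / INR m < u0 /\ 2 * (PI / INR m) <= PI.
Proof.
  intro Hu0. pose proof PI_RGT_0.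
  assert (ratio_pos : 0 < PI / u0) by (apply Rdiv_lt_0_compat; lra).
  destruct (archimed (PI / u0)) as [up_gt _].
  set (N := Z.to_nat (up (PI / u0))).
  assert (HN : PI / u0 < INR N).
  { unfold N. rewrite INR_IZR_INZ, Z2Nat.id; [lra|]. apply le_IZR. lra. }
  exists (N + 2)%nat. intros m Hm.
  apply le_INR in Hm. rewrite plus_INR in Hm. simpl in Hm.
  assert (Hm0 : 0 < INR m) by lra.
  assert (HM : PI < u0 * INR m).
  { replace PI with (PI / u0 * u0) by (field; lra).
    rewrite (Rmult_comm u0). apply Rmult_lt_compat_r; lra. }
  repeat split.
  - apply Rdiv_lt_0_compat; lra.
  - apply Rmult_lt_reg_r with (INR m); [exact Hm0|].
    unfold Rdiv. rewrite Rmult_assoc, Rinv_l by lra. lra.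
  - apply Rmult_le_reg_r with (INR m); [exact Hm0|].
    unfold Rdiv. rewrite Rmult_assoc, Rmult_assoc, Rinv_l by lra. nra.
Qed.

Theorem lemma2p2 (f H : R -> R)
  (hper : forall x, f (x + 2 * PI) = f x)
  (hcont : forall x, continuous f x)
  (hH : forall u, 0 < u -> 0 <= H u)
  (h1 : exists C u0, 0 < C /\ 0 < u0 /\
        forall u, 0 < u < u0 ->
          RInt (fun t => / (t ^ 2) * modcont f t) u PI <= C * H u)
  (h2 : exists C t0, 0 < C /\ 0 < t0 /\
        forall t, 0 < t < t0 ->
          exists I, is_RInt_gen H (at_right 0) (at_point t) I /\ I <= C * (t * H t)) :
  exists C (M : nat), 0 < C /\
    forall m : nat, (0 < m)%nat -> (M <= m)%nat ->
      RInt (modcont f) 0 (PI / INR m) <= C * (/ (INR m ^ 2) * H (PI / INR m)).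
Proof.
  destruct h1 as [C [u0 [HC [Hu0 hint]]]].
  pose proof PI_RGT_0 as HPI.
  destruct (periodic_bounded f (2 * PI) ltac:(lra) hper hcont) as [B HB].
  pose proof (periodic_uniformly_continuous f (2 * PI) ltac:(lra) hper hcont) as Hunif.
  destruct (eventually_PI_div_INR_small u0 Hu0) as [M HM].
  exists (4 * PI ^ 2 * C), M. split; [pose proof (pow_lt PI 2 HPI); nra|].
  intros m Hm0 Hm. destruct (HM m Hm) as [[Ha Hau] H2a].
  set (a := PI / INR m) in *.
  eapply Rle_trans.
  - apply (RInt_le_four_sq_mul_RInt_inv_sq (modcont f) (modcont_ge0 f B HB)
             (modcont_le_modcont f B HB) a PI Ha H2a).
    + apply (ex_RInt_modcont f B HB Hunif). lra.
    + apply (ex_RInt_inv_sq_modcont f B HB Hunif). lra.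
  - replace (4 * PI ^ 2 * C * (/ INR m ^ 2 * H a)) with (4 * a ^ 2 * (C * H a))
      by (unfold a; field; apply not_0_INR; lia).
    apply Rmult_le_compat_l; [nra | apply hint; lra].
Qed.
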